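(* Every partial field is global: if $F$ is a partial field, then $F$ is isomorphic to $\Gamma(\mathrm{Spec}(F))=\mathcal{O}_X(X)$ where $(X,\mathcal{O}_X)=\mathrm{Spec}(F)$.
   Context: A partial ring is a set with $0$, a set of summable pairs and a commutative, unital, associative (in the sense: $(a,b),(a+b,c)$ summable iff $(b,c),(a,b+c)$ summable, and then $(a+b)+c=a+(b+c)$) partial addition, together with a commutative associative multiplication with unit $1$ such that $0\cdot a=0$ and multiplication distributes over summable pairs (if $(a_1,a_2)$ is summable then so is $(a_1x,a_2x)$ and $(a_1+a_2)x=a_1x+a_2x$). A partial field is a partial ring in which every nonzero element has a multiplicative inverse. For a partial ring $A$, $X_A$ is the set of prime ideals with the topology generated by $D(a)=\{\mathfrak p: a\notin\mathfrak p\}$; for open $U$, $S_U=\{a: a\notin\mathfrak p\ \forall \mathfrak p\in U\}$, and $\mathcal{O}_X$ is the sheafification of $U\mapsto S_U^{-1}A$ (localization: classes $a/s$ with $a/s=b/t$ iff $uta=usb$ for some $u\in S_U$). $\mathrm{Spec}(A)=(X_A,\mathcal{O}_X)$. A partial ring is global if it is isomorphic to $\Gamma(X,\mathcal{O})=\mathcal{O}(X)$ for some affine partial scheme $(X,\mathcal{O})$, i.e. a locally partial-ringed space isomorphic to $\mathrm{Spec}(A)$ for some partial ring $A$. *)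

From Stdlib Require Import List.
Import ListNotations.
Set Implicit Arguments.

(* Raw data of a partial ring: carrier, 0, 1, the summability relation,
   the (partial) addition (only meaningful on summable pairs) and the
   multiplication. *)
Record PRData := {
  car :> Type;
  pzero : car;
  pone : car;
  summ : car -> car -> Prop;
  padd : car -> car -> car;
  pmul : car -> car -> car
}.

Arguments pzero {_}.
Arguments pone {_}.
Arguments summ {_}.
Arguments padd {_}.
Arguments pmul {_}.

Definition is_partial_ring (R : PRData) : Prop :=
  (forall a b : R, summ a b -> summ b a /\ padd a b = padd b a) /\
  (forall a : R, summ a pzero /\ padd a pzero = a) /\
  (forall a b c : R,
     (summ a b /\ summ (padd a b) c) <-> (summ b c /\ summ a (padd b c))) /\
  (forall a b c : R, summ a b -> summ (padd a b) c ->
     padd (padd a b) c = padd a (padd b c)) /\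
  (forall a b : R, pmul a b = pmul b a) /\
  (forall a b c : R, pmul (pmul a b) c = pmul a (pmul b c)) /\
  (forall a : R, pmul pone a = a) /\
  (forall a : R, pmul pzero a = pzero) /\
  (forall a1 a2 x : R, summ a1 a2 ->
     summ (pmul a1 x) (pmul a2 x) /\
     pmul (padd a1 a2) x = padd (pmul a1 x) (pmul a2 x)).

Definition is_partial_field (R : PRData) : Prop :=
  is_partial_ring R /\
  (forall a : R, a <> pzero -> exists b : R, pmul a b = pone).

Definition is_ideal (R : PRData) (I : R -> Prop) : Prop :=
  I pzero /\
  (forall a b : R, I a -> I b -> summ a b -> I (padd a b)) /\
  (forall a x : R, I a -> I (pmul a x)).

Definition is_prime (R : PRData) (P : R -> Prop) : Prop :=
  is_ideal R P /\ ~ P pone /\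
  (forall a b : R, P (pmul a b) -> P a \/ P b).

Definition Pt (R : PRData) := { P : R -> Prop | is_prime R P }.

Definition Dopen (R : PRData) (a : R) : Pt R -> Prop :=
  fun p => ~ proj1_sig p a.

(* the topology generated by the D(a): unions of finite intersections *)
Definition is_open (R : PRData) (U : Pt R -> Prop) : Prop :=
  forall p, U p -> exists l : list R,
    (forall x, In x l -> Dopen x p) /\
    (forall q, (forall x, In x l -> Dopen x q) -> U q).

Definition SU (R : PRData) (U : Pt R -> Prop) (a : R) : Prop :=
  forall p, U p -> ~ proj1_sig p a.

(* equality a/s = b/t in S_U^{-1} R *)
Definition loc_eq (R : PRData) (U : Pt R -> Prop) (a s b t : R) : Prop :=
  exists u, SU U u /\ pmul u (pmul t a) = pmul u (pmul s b).

(* a representative (V, a/s) of a germ: a/s in S_V^{-1} R *)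
Record germ (R : PRData) := mkgerm {
  gV : Pt R -> Prop;
  gnum : R;
  gden : R
}.

Definition valid_at (R : PRData) (p : Pt R) (g : germ R) : Prop :=
  is_open (gV g) /\ gV g p /\ SU (gV g) (gden g).

Definition germ_eq (R : PRData) (p : Pt R) (g h : germ R) : Prop :=
  exists Z : Pt R -> Prop, is_open Z /\ Z p /\
    (forall q, Z q -> gV g q) /\ (forall q, Z q -> gV h q) /\
    loc_eq Z (gnum g) (gden g) (gnum h) (gden h).

Definition germ_class (R : PRData) (p : Pt R) (g : germ R) : germ R -> Prop :=
  fun h => valid_at p h /\ germ_eq p g h.

Definition is_stalk_elt (R : PRData) (p : Pt R) (C : germ R -> Prop) : Prop :=
  exists g, valid_at p g /\ C = germ_class p g.

Definition setT (R : PRData) : Pt R -> Prop := fun _ => True.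

Definition stalk_zero (R : PRData) (p : Pt R) := germ_class p (mkgerm (@setT R) pzero pone).
Definition stalk_one (R : PRData) (p : Pt R) := germ_class p (mkgerm (@setT R) pone pone).

Definition stalk_mul (R : PRData) (p : Pt R) (C D : germ R -> Prop) : germ R -> Prop :=
  fun h => valid_at p h /\ exists g1 g2, C g1 /\ D g2 /\
    germ_eq p (mkgerm (fun q => gV g1 q /\ gV g2 q)
                      (pmul (gnum g1) (gnum g2)) (pmul (gden g1) (gden g2))) h.

(* summability in the stalk: represented at some stage V by a pair
   summable in S_V^{-1} R, i.e. with a common denominator and summable
   numerators *)
Definition stalk_summ (R : PRData) (p : Pt R) (C D : germ R -> Prop) : Prop :=
  exists g1 g2, C g1 /\ D g2 /\ gV g1 = gV g2 /\ gden g1 = gden g2 /\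
    summ (gnum g1) (gnum g2).

Definition stalk_add (R : PRData) (p : Pt R) (C D : germ R -> Prop) : germ R -> Prop :=
  fun h => valid_at p h /\ exists g1 g2, C g1 /\ D g2 /\ gV g1 = gV g2 /\
    gden g1 = gden g2 /\ summ (gnum g1) (gnum g2) /\
    germ_eq p (mkgerm (gV g1) (padd (gnum g1) (gnum g2)) (gden g1)) h.

(* families of stalk elements over X *)
Definition Fam (R : PRData) := Pt R -> germ R -> Prop.

(* sections of the sheafification over X: families of germs that are
   locally given by a section of the presheaf *)
Definition is_global_section (R : PRData) (sigma : Fam R) : Prop :=
  (forall p, is_stalk_elt p (sigma p)) /\
  (forall p, exists (V : Pt R -> Prop) (a s : R),
      is_open V /\ V p /\ SU V s /\
      forall q, V q -> sigma q (mkgerm V a s)).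

Definition Fam_data (R : PRData) : PRData := {|
  car := Fam R;
  pzero := fun p => stalk_zero p;
  pone := fun p => stalk_one p;
  summ := fun s t => forall p, stalk_summ p (s p) (t p);
  padd := fun s t p => stalk_add p (s p) (t p);
  pmul := fun s t p => stalk_mul p (s p) (t p)
|}.

(* phi is an isomorphism of partial rings from A onto the sub-structure of
   B carried by the predicate sub (here: O_X(X) inside the families) *)
Definition is_iso_onto (A B : PRData) (sub : B -> Prop) (phi : A -> B) : Prop :=
  (forall a b, phi a = phi b -> a = b) /\
  (forall y, sub y <-> exists a, phi a = y) /\
  phi pzero = pzero /\ phi pone = pone /\
  (forall a b, phi (pmul a b) = pmul (phi a) (phi b)) /\
  (forall a b, summ a b <-> summ (phi a) (phi b)) /\
  (forall a b, summ a b -> phi (padd a b) = padd (phi a) (phi b)).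

(* In a partial field every nonzero element is a unit, so a prime ideal, which
   cannot contain 1, is {0}; there is no prime at all when 1 = 0.  Hence
   Spec F has at most one point, every nonempty open set is the whole space,
   S_X consists of the nonzero elements, and a germ a/s is determined by the
   element a s^-1 of F.  Stalk operations then become the operations of F, and
   the constant sections c/1 are an isomorphism from F onto O_X(X). *)

From Stdlib Require Import Classical ClassicalEpsilon FunctionalExtensionality PropExtensionality.
Set Implicit Arguments.

Section PartialField.

Variable F : PRData.
Hypothesis hF : is_partial_field F.

Lemma pmulC (a b : F) : pmul a b = pmul b a.
Proof. destruct hF as [(_ & _ & _ & _ & H & _) _]. apply H. Qed.

Lemma pmulA (a b c : F) : pmul (pmul a b) c = pmul a (pmul b c).
Proof. destruct hF as [(_ & _ & _ & _ & _ & H & _) _]. apply H. Qed.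

Lemma pmul1r (a : F) : pmul pone a = a.
Proof. destruct hF as [(_ & _ & _ & _ & _ & _ & H & _) _]. apply H. Qed.

Lemma pmul0r (a : F) : pmul pzero a = pzero.
Proof. destruct hF as [(_ & _ & _ & _ & _ & _ & _ & H & _) _]. apply H. Qed.

Lemma summ_padd0 (a : F) : summ a pzero /\ padd a pzero = a.
Proof. destruct hF as [(_ & H & _) _]. apply H. Qed.

Lemma pmulDl (a1 a2 x : F) : summ a1 a2 ->
  summ (pmul a1 x) (pmul a2 x) /\ pmul (padd a1 a2) x = padd (pmul a1 x) (pmul a2 x).
Proof. destruct hF as [(_ & _ & _ & _ & _ & _ & _ & _ & H) _]. apply H. Qed.

Lemma pmulACA (a b c d : F) :
  pmul (pmul a b) (pmul c d) = pmul (pmul a c) (pmul b d).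
Proof.
  rewrite pmulA, <- (pmulA b c d), (pmulC b c), (pmulA c b d), <- (pmulA a c).
  reflexivity.
Qed.

Definition pinv (x : F) : F := epsilon (inhabits pzero) (fun y => pmul x y = pone).

Lemma pmulfV {x : F} : x <> pzero -> pmul x (pinv x) = pone.
Proof.
  intro x_neq0. destruct hF as [_ inv_ex]. destruct (inv_ex x x_neq0) as [y xy1].
  apply (epsilon_spec (inhabits pzero) (fun y => pmul x y = pone)). exists y; exact xy1.
Qed.

Lemma pmulVf {x : F} : x <> pzero -> pmul (pinv x) x = pone.
Proof. intro x_neq0. rewrite pmulC. apply pmulfV; exact x_neq0. Qed.

Lemma pmulfI {t x y : F} : t <> pzero -> pmul t x = pmul t y -> x = y.
Proof.
  intros t_neq0 E.
  rewrite <- (pmul1r x), <- (pmul1r y), <- (pmulVf t_neq0), !pmulA, E. reflexivity.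
Qed.

Lemma pmulf_neq0 {a b : F} : a <> pzero -> b <> pzero -> pmul a b <> pzero.
Proof.
  intros a_neq0 b_neq0 ab0. apply b_neq0. apply (pmulfI a_neq0).
  rewrite ab0, pmulC, pmul0r. reflexivity.
Qed.

Lemma pinv1 : pone <> pzero :> F -> pinv pone = pone :> F.
Proof. intro one_neq0. rewrite <- (pmul1r (pinv pone)). apply pmulfV; exact one_neq0. Qed.

Lemma pinvM (s t : F) : s <> pzero -> t <> pzero ->
  pinv (pmul s t) = pmul (pinv s) (pinv t).
Proof.
  intros s_neq0 t_neq0. assert (st_neq0 := pmulf_neq0 s_neq0 t_neq0).
  apply (pmulfI st_neq0).
  rewrite pmulfV, pmulACA, pmulfV, pmulfV, pmul1r by assumption. reflexivity.
Qed.

Lemma cross_mul_eqE {a s b t : F} : s <> pzero -> t <> pzero ->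
  (pmul t a = pmul s b <-> pmul a (pinv s) = pmul b (pinv t)).
Proof.
  intros s_neq0 t_neq0.
  set (x := pmul a (pinv s)). set (y := pmul b (pinv t)).
  assert (Ea : a = pmul s x).
  { unfold x. rewrite (pmulC a), <- pmulA, pmulfV, pmul1r by assumption. reflexivity. }
  assert (Eb : b = pmul t y).
  { unfold y. rewrite (pmulC b), <- pmulA, pmulfV, pmul1r by assumption. reflexivity. }
  clearbody x y. subst a b. rewrite <- !pmulA, (pmulC s t).
  split; [apply pmulfI, pmulf_neq0; assumption | intros ->; reflexivity].
Qed.

Lemma pt_memE (p : Pt F) (x : F) : proj1_sig p x <-> x = pzero.
Proof.
  destruct p as [P HP]; simpl. destruct HP as [[P0 [_ Pmul]] [P1 _]]. split.
  - intro Px. apply NNPP. intro x_neq0.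
    apply P1. rewrite <- (pmulfV x_neq0). apply Pmul; exact Px.
  - intros ->; exact P0.
Qed.

Lemma pt_one_neq0 (p : Pt F) : pone <> pzero :> F.
Proof.
  intro one_eq0. apply (pt_memE p) in one_eq0.
  destruct p as [P HP]; simpl in one_eq0. destruct HP as [_ [P1 _]]. exact (P1 one_eq0).
Qed.

Lemma zero_ideal_prime : pone <> pzero :> F -> is_prime F (fun a => a = pzero).
Proof.
  intro one_neq0. split; [split; [reflexivity | split] | split; [exact one_neq0 |]].
  - intros a b -> -> _. apply summ_padd0.
  - intros a x ->. apply pmul0r.
  - intros a b ab0. destruct (classic (a = pzero)) as [a0 | a_neq0]; [left; exact a0 | right].
    apply (pmulfI a_neq0). rewrite ab0, pmulC, pmul0r. reflexivity.
Qed.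

Lemma open_full {V : Pt F -> Prop} {p : Pt F} : is_open V -> V p -> forall q, V q.
Proof.
  intros V_open Vp q. destruct (V_open p Vp) as [l [l_at_p l_sub]]. apply l_sub.
  intros x lx. specialize (l_at_p x lx). unfold Dopen in *. rewrite pt_memE in *.
  exact l_at_p.
Qed.

Lemma full_open (V : Pt F -> Prop) : (forall q, V q) -> is_open V.
Proof. intros V_full p _. exists nil. split; [intros x [] | intros; apply V_full]. Qed.

Lemma SU_neq0 {V : Pt F -> Prop} {p : Pt F} {s : F} : SU V s -> V p -> s <> pzero.
Proof. intros s_SU Vp s0. apply (s_SU p Vp). apply pt_memE; exact s0. Qed.

Lemma neq0_SU (V : Pt F -> Prop) (s : F) : s <> pzero -> SU V s.
Proof. intros s_neq0 p _ ps. apply s_neq0. apply (pt_memE p); exact ps. Qed.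

Definition germ_val (g : germ F) : F := pmul (gnum g) (pinv (gden g)).

Definition const_germ (c : F) : germ F := mkgerm (@setT F) c pone.

Definition mul_germ (g1 g2 : germ F) : germ F :=
  mkgerm (fun q => gV g1 q /\ gV g2 q) (pmul (gnum g1) (gnum g2)) (pmul (gden g1) (gden g2)).

Lemma valid_atE (p : Pt F) (g : germ F) :
  valid_at p g <-> (forall q, gV g q) /\ gden g <> pzero.
Proof.
  split.
  - intros [V_open [Vp s_SU]]. split; [exact (open_full V_open Vp) | exact (SU_neq0 s_SU Vp)].
  - intros [V_full s_neq0]. split; [apply full_open; exact V_full |].
    split; [apply V_full | apply neq0_SU; exact s_neq0].
Qed.

Lemma germ_eqE {p : Pt F} {g h : germ F} : valid_at p g -> valid_at p h ->
  (germ_eq p g h <-> germ_val g = germ_val h).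
Proof.
  rewrite !valid_atE. intros [g_full g_neq0] [h_full h_neq0]. unfold germ_val. split.
  - intros [Z [_ [Zp [_ [_ [u [u_SU E]]]]]]].
    apply (pmulfI (SU_neq0 u_SU Zp)) in E. apply (cross_mul_eqE g_neq0 h_neq0); exact E.
  - intro E. exists (@setT F).
    split; [apply full_open; intro; exact I |]. split; [exact I |].
    split; [intros; apply g_full |]. split; [intros; apply h_full |].
    exists pone. split; [apply neq0_SU, (pt_one_neq0 p) |].
    rewrite !pmul1r. apply (cross_mul_eqE g_neq0 h_neq0); exact E.
Qed.

Lemma germ_classE {p : Pt F} {g : germ F} (h : germ F) : valid_at p g ->
  (germ_class p g h <-> valid_at p h /\ germ_val h = germ_val g).
Proof.
  intro g_valid. unfold germ_class.
  split; intros [h_valid E]; split; try exact h_valid.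
  - symmetry. apply (germ_eqE g_valid h_valid); exact E.
  - apply (germ_eqE g_valid h_valid). symmetry; exact E.
Qed.

Lemma germ_class_refl (p : Pt F) (g : germ F) : valid_at p g -> germ_class p g g.
Proof. intro g_valid. apply germ_classE; auto. Qed.

Lemma germ_class_eq (p : Pt F) (g h : germ F) : valid_at p g -> valid_at p h ->
  germ_val g = germ_val h -> germ_class p g = germ_class p h.
Proof.
  intros g_valid h_valid E. apply functional_extensionality; intro k.
  apply propositional_extensionality.
  rewrite (germ_classE k g_valid), (germ_classE k h_valid), E. reflexivity.
Qed.

Lemma const_germ_valid (p : Pt F) (c : F) : valid_at p (const_germ c).
Proof. apply valid_atE. split; [intro; exact I | exact (pt_one_neq0 p)]. Qed.

Lemma germ_val_const (p : Pt F) (c : F) : germ_val (const_germ c) = c.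
Proof.
  unfold germ_val, const_germ; simpl.
  rewrite (pinv1 (pt_one_neq0 p)), pmulC, pmul1r. reflexivity.
Qed.

Lemma germ_class_constE (p : Pt F) (c : F) (h : germ F) :
  germ_class p (const_germ c) h <-> valid_at p h /\ germ_val h = c.
Proof. rewrite (germ_classE h (const_germ_valid p c)), (germ_val_const p). reflexivity. Qed.

Lemma germ_class_const_val (p : Pt F) (g : germ F) :
  valid_at p g -> germ_class p g (const_germ (germ_val g)).
Proof.
  intro g_valid. apply (germ_classE _ g_valid).
  split; [apply const_germ_valid | apply (germ_val_const p)].
Qed.

Lemma mul_germ_valid (p : Pt F) (g1 g2 : germ F) :
  valid_at p g1 -> valid_at p g2 -> valid_at p (mul_germ g1 g2).
Proof.
  rewrite !valid_atE. intros [g1_full g1_neq0] [g2_full g2_neq0].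
  split; [intro q; split; auto | apply pmulf_neq0; assumption].
Qed.

Lemma germ_val_mul {p : Pt F} {g1 g2 : germ F} : valid_at p g1 -> valid_at p g2 ->
  germ_val (mul_germ g1 g2) = pmul (germ_val g1) (germ_val g2).
Proof.
  rewrite !valid_atE. intros [_ g1_neq0] [_ g2_neq0].
  unfold germ_val; simpl. rewrite pinvM, pmulACA by assumption. reflexivity.
Qed.

Lemma stalk_mul_classE (p : Pt F) (g1 g2 h : germ F) : valid_at p g1 -> valid_at p g2 ->
  (stalk_mul p (germ_class p g1) (germ_class p g2) h <->
   valid_at p h /\ germ_val h = pmul (germ_val g1) (germ_val g2)).
Proof.
  intros g1_valid g2_valid. split.
  - intros [h_valid [k1 [k2 [k1_g1 [k2_g2 E]]]]]. split; [exact h_valid |].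
    apply germ_classE in k1_g1 as [k1_valid E1]; [| exact g1_valid].
    apply germ_classE in k2_g2 as [k2_valid E2]; [| exact g2_valid].
    apply germ_eqE in E; [| apply mul_germ_valid; assumption | exact h_valid].
    fold (mul_germ k1 k2) in E.
    rewrite <- E, (germ_val_mul k1_valid k2_valid), E1, E2. reflexivity.
  - intros [h_valid E]. split; [exact h_valid |].
    exists g1, g2. split; [apply germ_class_refl; exact g1_valid |].
    split; [apply germ_class_refl; exact g2_valid |].
    apply germ_eqE; [apply mul_germ_valid; assumption | exact h_valid |].
    rewrite E. exact (germ_val_mul g1_valid g2_valid).
Qed.

Lemma stalk_summ_classE (p : Pt F) (g1 g2 : germ F) : valid_at p g1 -> valid_at p g2 ->
  (stalk_summ p (germ_class p g1) (germ_class p g2) <-> summ (germ_val g1) (germ_val g2)).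
Proof.
  intros g1_valid g2_valid. split.
  - intros [k1 [k2 [k1_g1 [k2_g2 [_ [Eden S]]]]]].
    apply germ_classE in k1_g1 as [_ E1]; [| exact g1_valid].
    apply germ_classE in k2_g2 as [_ E2]; [| exact g2_valid].
    rewrite <- E1, <- E2. unfold germ_val. rewrite Eden.
    apply pmulDl; exact S.
  - intro S. exists (const_germ (germ_val g1)), (const_germ (germ_val g2)).
    split; [apply germ_class_const_val; exact g1_valid |].
    split; [apply germ_class_const_val; exact g2_valid |].
    split; [reflexivity |]. split; [reflexivity | exact S].
Qed.

Lemma stalk_add_classE (p : Pt F) (g1 g2 h : germ F) : valid_at p g1 -> valid_at p g2 ->
  (stalk_add p (germ_class p g1) (germ_class p g2) h <->
   valid_at p h /\ summ (germ_val g1) (germ_val g2) /\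
   germ_val h = padd (germ_val g1) (germ_val g2)).
Proof.
  intros g1_valid g2_valid. split.
  - intros [h_valid [k1 [k2 [k1_g1 [k2_g2 [_ [Eden [S E]]]]]]]]. split; [exact h_valid |].
    apply germ_classE in k1_g1 as [k1_valid E1]; [| exact g1_valid].
    apply germ_classE in k2_g2 as [_ E2]; [| exact g2_valid].
    apply germ_eqE in E; [| exact k1_valid | exact h_valid].
    rewrite <- E1, <- E2, <- E. unfold germ_val; simpl. rewrite Eden.
    apply pmulDl; exact S.
  - intros [h_valid [S E]]. split; [exact h_valid |].
    exists (const_germ (germ_val g1)), (const_germ (germ_val g2)).
    split; [apply germ_class_const_val; exact g1_valid |].
    split; [apply germ_class_const_val; exact g2_valid |].
    split; [reflexivity |]. split; [reflexivity |]. split; [exact S |].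
    apply germ_eqE; [apply const_germ_valid | exact h_valid |].
    change (germ_val (const_germ (padd (germ_val g1) (germ_val g2))) = germ_val h).
    rewrite (germ_val_const p), E. reflexivity.
Qed.

Definition const_section (c : F) : Fam_data F := fun p => germ_class p (const_germ c).

Lemma fam_ext (s t : Fam F) : (forall p h, s p h <-> t p h) -> s = t.
Proof.
  intro st. apply functional_extensionality; intro p.
  apply functional_extensionality; intro h. apply propositional_extensionality, st.
Qed.

Lemma const_section_global (c : F) : pone <> pzero :> F ->
  is_global_section (const_section c).
Proof.
  intro one_neq0. split.
  - intro p. exists (const_germ c). split; [apply const_germ_valid | reflexivity].
  - intro p. exists (@setT F), c, pone.
    split; [apply full_open; intro; exact I |]. split; [exact I |].
    split; [apply neq0_SU; exact one_neq0 |].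
    intros q _. apply germ_class_refl, const_germ_valid.
Qed.

Section NonzeroOne.

Hypothesis one_neq0 : pone <> pzero :> F.

Definition zero_pt : Pt F := exist _ _ (zero_ideal_prime one_neq0).

Lemma const_section_inj (a b : F) : const_section a = const_section b -> a = b.
Proof.
  intro E. assert (a_a : const_section a zero_pt (const_germ a))
    by (apply germ_class_refl, const_germ_valid).
  rewrite E in a_a. apply germ_class_constE in a_a as [_ a_b].
  rewrite (germ_val_const zero_pt) in a_b. exact a_b.
Qed.

Lemma global_section_const (y : Fam F) :
  is_global_section y -> exists c, const_section c = y.
Proof.
  intros [y_stalk y_local]. destruct (y_local zero_pt) as [V [a [s [V_open [V0 [s_SU y_as]]]]]].
  exists (germ_val (mkgerm V a s)). apply functional_extensionality; intro q.
  destruct (y_stalk q) as [k [k_valid y_q]].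
  assert (k_as := y_as q (open_full V_open V0 q)). rewrite y_q in k_as |- *.
  apply germ_classE in k_as as [_ E]; [| exact k_valid].
  apply germ_class_eq; [apply const_germ_valid | exact k_valid |].
  rewrite (germ_val_const q). exact E.
Qed.

Lemma const_sectionM (a b : F) :
  const_section (pmul a b) = pmul (const_section a) (const_section b).
Proof.
  apply fam_ext; intros p h. simpl. unfold const_section.
  rewrite germ_class_constE, stalk_mul_classE by apply const_germ_valid.
  rewrite !(germ_val_const p). reflexivity.
Qed.

Lemma summ_const_sectionE (a b : F) :
  summ a b <-> summ (const_section a) (const_section b).
Proof.
  simpl. unfold const_section. split.
  - intros S p. apply stalk_summ_classE; try apply const_germ_valid.
    rewrite !(germ_val_const p). exact S.
  - intro S. specialize (S zero_pt).
    apply stalk_summ_classE in S; try apply const_germ_valid.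
    rewrite !(germ_val_const zero_pt) in S. exact S.
Qed.

Lemma const_sectionD (a b : F) : summ a b ->
  const_section (padd a b) = padd (const_section a) (const_section b).
Proof.
  intro S. apply fam_ext; intros p h. simpl. unfold const_section.
  rewrite germ_class_constE, stalk_add_classE by apply const_germ_valid.
  rewrite !(germ_val_const p). tauto.
Qed.

Lemma const_section_iso : @is_iso_onto F (Fam_data F) (@is_global_section F) const_section.
Proof.
  split; [exact const_section_inj |].
  split; [intro y; split; [apply global_section_const |
                           intros [c <-]; apply const_section_global, one_neq0] |].
  split; [reflexivity |]. split; [reflexivity |].
  split; [exact const_sectionM |].
  split; [exact summ_const_sectionE | exact const_sectionD].
Qed.

End NonzeroOne.

Lemma const_section_iso_one_eq0 : pone = pzero :> F ->
  @is_iso_onto F (Fam_data F) (@is_global_section F) const_section.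
Proof.
  intro one_eq0.
  assert (all0 : forall x : F, x = pzero).
  { intro x. rewrite <- (pmul1r x), one_eq0, pmul0r. reflexivity. }
  assert (fam_eq : forall s t : Fam F, s = t).
  { intros s t. apply fam_ext. intro p. destruct (pt_one_neq0 p one_eq0). }
  split; [intros a b _; rewrite (all0 a), (all0 b); reflexivity |].
  split; [intro y; split; [intros _; exists pzero; apply fam_eq |
                           intros _; split; intro p; destruct (pt_one_neq0 p one_eq0)] |].
  split; [apply fam_eq |]. split; [apply fam_eq |]. split; [intros; apply fam_eq |].
  split; [| intros; apply fam_eq].
  intros a b. split; [intros _ p; destruct (pt_one_neq0 p one_eq0) |].
  intros _. rewrite (all0 a), (all0 b). apply summ_padd0.
Qed.

End PartialField.

Theorem mainTheorem13 (F : PRData) (hF : is_partial_field F) :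
  exists phi : F -> Fam_data F,
    @is_iso_onto F (Fam_data F) (@is_global_section F) phi.
Proof.
  exists (@const_section F).
  destruct (classic (pone = pzero :> F)) as [one_eq0 | one_neq0].
  - exact (const_section_iso_one_eq0 hF one_eq0).
  - exact (const_section_iso hF one_neq0).
Qed.
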